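(* For positive integers $D_1,D_2$ and an integer $u$, let \[ \mathcal{R}'(u,D_1,D_2)=\max_{\substack{(a,D_1)=1\\(b,D_2)=1}}\ \sum_{t\bmod D_1}\big|\widehat S(a,bu,t,1;D_1,D_2)\big|. \] Then $\mathcal{R}'(u,D_1,D_2)=\mathcal{R}(u,D_2,D_1)$.
   Context: Notation: $e(x)=e^{2\pi ix}$. For integers $m_1,m_2,n_1,n_2$ and positive integers $D_1,D_2$, the $GL_3$ Kloosterman sum is \[ S(m_1,m_2,n_1,n_2;D_1,D_2)=\sum e\Big(\frac{m_1B_1+n_1(Y_1D_2-Z_1B_2)}{D_1}\Big)e\Big(\frac{m_2B_2+n_2(Y_2D_1-Z_2B_1)}{D_2}\Big), \] the sum over $B_1,C_1 \bmod D_1$, $B_2,C_2\bmod D_2$ with $\gcd(B_1,C_1,D_1)=\gcd(B_2,C_2,D_2)=1$ and $D_1C_2+B_1B_2+C_1D_2\equiv 0\pmod{D_1D_2}$, where $Y_1B_1+Z_1C_1\equiv 1\pmod{D_1}$, $Y_2B_2+Z_2C_2\equiv1\pmod{D_2}$ (independent of choices). For integers $a,b$ with $(a,D_1)=(b,D_2)=1$ and integers $u,t$, \[ \widehat S(a,u,t,b;D_1,D_2)=\frac{1}{D_1D_2}\sum_{x\bmod D_1}\sum_{y\bmod D_2}S(a,y,x,b;D_1,D_2)\,e\Big(\frac{-xt}{D_1}\Big)e\Big(\frac{-yu}{D_2}\Big), \] and $\mathcal{R}(t,D_1,D_2)=\max_{(ab,D_1)=1}\sum_{u\bmod D_2}|\widehat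 S(a,u,bt,1;D_1,D_2)|$ (maximum over integers $a,b$ coprime to $D_1$). *)

From HB Require Import structures.
From mathcomp Require Import all_boot all_order all_algebra.
From mathcomp Require Import reals trigo.
From mathcomp Require Import complex.
Set Implicit Arguments. Unset Strict Implicit. Unset Printing Implicit Defensive.
Import Order.TTheory GRing.Theory Num.Theory.
Local Open Scope ring_scope.
Local Open Scope complex_scope.

Section Defs.
Variable R : realType.

(* e(k/n) = exp(2 pi i k / n) *)
Definition ee (k : int) (n : nat) : R[i] :=
  (cos (2 * pi * k%:~R / n%:R)) +i* (sin (2 * pi * k%:~R / n%:R)).

Definition YZ (D : nat) (B C : 'I_D) : 'I_D * 'I_D :=
  odflt (B, C) [pick p : 'I_D * 'I_D | (p.1 * B + p.2 * C == 1 %[mod D])%N].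

Definition kl_cond (D1 D2 : nat) (B1 C1 : 'I_D1) (B2 C2 : 'I_D2) : bool :=
  [&& gcdn (gcdn B1 C1) D1 == 1%N, gcdn (gcdn B2 C2) D2 == 1%N &
      ((D1 * C2 + B1 * B2 + C1 * D2) %% (D1 * D2) == 0)%N].

Definition KlS (m1 m2 n1 n2 : int) (D1 D2 : nat) : R[i] :=
  \sum_(B1 : 'I_D1) \sum_(C1 : 'I_D1) \sum_(B2 : 'I_D2) \sum_(C2 : 'I_D2)
    if kl_cond B1 C1 B2 C2 then
      let Y1 := (YZ B1 C1).1 in let Z1 := (YZ B1 C1).2 in
      let Y2 := (YZ B2 C2).1 in let Z2 := (YZ B2 C2).2 in
      ee (m1 * B1%:Z + n1 * (Y1%:Z * D2%:Z - Z1%:Z * B2%:Z)) D1 *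
      ee (m2 * B2%:Z + n2 * (Y2%:Z * D1%:Z - Z2%:Z * B1%:Z)) D2
    else 0.

Definition KlShat (a u t b : int) (D1 D2 : nat) : R[i] :=
  (D1%:R * D2%:R)^-1 *
  \sum_(x : 'I_D1) \sum_(y : 'I_D2)
     KlS a y%:Z x%:Z b D1 D2 * ee (- (x%:Z * t)) D1 * ee (- (y%:Z * u)) D2.

Definition cabs (z : R[i]) : R := let: a +i* b := z in Num.sqrt (a ^+ 2 + b ^+ 2).

Definition RR (t : int) (D1 D2 : nat) : R :=
  \big[Num.max/0]_(a : 'I_D1 | coprime a D1)
   \big[Num.max/0]_(b : 'I_D1 | coprime b D1)
     \sum_(u : 'I_D2) cabs (KlShat a%:Z u%:Z (b%:Z * t) 1 D1 D2).

Definition RR' (u : int) (D1 D2 : nat) : R :=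
  \big[Num.max/0]_(a : 'I_D1 | coprime a D1)
   \big[Num.max/0]_(b : 'I_D2 | coprime b D2)
     \sum_(t : 'I_D1) cabs (KlShat a%:Z (b%:Z * u) t%:Z 1 D1 D2).

End Defs.

From mathcomp Require Import all_boot all_order all_algebra.
From mathcomp Require Import reals trigo complex.
From mathcomp Require Import ring.
Import Order.TTheory GRing.Theory Num.Theory.
Local Open Scope ring_scope.

(* The proof rests on three symmetries of the GL(3) Kloosterman sum, each
   realised by a bijection of its summation set: swapping the moduli,
   S(m1,m2,n1,n2;D1,D2) = S(m2,m1,n2,n1;D2,D1); the duality
   S(m1,m2,n1,n2;D1,D2) = S(n1,n2,m1,m2;D1,D2), which exchanges B_i with
   X_i = Y_i D_j - Z_i B_j; and the torus action
   S(m1,m2,n1,n2;D1,D2) = S(s m1,m2,s^-1 n1,n2;D1,D2) for s a unit mod D1 D2.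
   Lift a unit a mod D1 (resp. mod D2) to such an s. The torus action turns
   Shat(a,v,t,1;D1,D2) into Shat(1,v,s^-1 t,1;D1,D2), and the sum over t of
   absolute values does not see the rescaling of t; the three symmetries
   together turn Shat(a,u',w,1;D2,D1) into Shat(1,s^-1 w,u',1;D1,D2).
   Both sides of the theorem thereby become the maximum, over units b mod D2,
   of the sum over t of |Shat(1,b u,t,1;D1,D2)|. *)

Lemma dvdz_comb1 {d E1 : int} (c1 : int) {e : int} :
  (d %| E1)%Z -> e = c1 * E1 -> (d %| e)%Z.
Proof. by move=> h ->; rewrite dvdz_mull. Qed.

Lemma dvdz_comb2 {d E1 E2 : int} (c1 c2 : int) {e : int} :
  (d %| E1)%Z -> (d %| E2)%Z -> e = c1 * E1 + c2 * E2 -> (d %| e)%Z.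
Proof. by move=> h1 h2 ->; rewrite rpredD // dvdz_mull. Qed.

Lemma dvdz_comb3 {d E1 E2 E3 : int} (c1 c2 c3 : int) {e : int} :
  (d %| E1)%Z -> (d %| E2)%Z -> (d %| E3)%Z ->
  e = c1 * E1 + c2 * E2 + c3 * E3 -> (d %| e)%Z.
Proof. by move=> h1 h2 h3 ->; rewrite !rpredD // dvdz_mull. Qed.

Lemma dvdz_comb4 {d E1 E2 E3 E4 : int} (c1 c2 c3 c4 : int) {e : int} :
  (d %| E1)%Z -> (d %| E2)%Z -> (d %| E3)%Z -> (d %| E4)%Z ->
  e = c1 * E1 + c2 * E2 + c3 * E3 + c4 * E4 -> (d %| e)%Z.
Proof. by move=> h1 h2 h3 h4 ->; rewrite !rpredD // dvdz_mull. Qed.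

Lemma dvdz_comb5 {d E1 E2 E3 E4 E5 : int} (c1 c2 c3 c4 c5 : int) {e : int} :
  (d %| E1)%Z -> (d %| E2)%Z -> (d %| E3)%Z -> (d %| E4)%Z -> (d %| E5)%Z ->
  e = c1 * E1 + c2 * E2 + c3 * E3 + c4 * E4 + c5 * E5 -> (d %| e)%Z.
Proof. by move=> h1 h2 h3 h4 h5 ->; rewrite !rpredD // dvdz_mull. Qed.

Lemma dvdz_comb6 {d E1 E2 E3 E4 E5 E6 : int} (c1 c2 c3 c4 c5 c6 : int) {e : int} :
  (d %| E1)%Z -> (d %| E2)%Z -> (d %| E3)%Z -> (d %| E4)%Z -> (d %| E5)%Z ->
  (d %| E6)%Z ->
  e = c1 * E1 + c2 * E2 + c3 * E3 + c4 * E4 + c5 * E5 + c6 * E6 -> (d %| e)%Z.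
Proof. by move=> h1 h2 h3 h4 h5 h6 ->; rewrite !rpredD // dvdz_mull. Qed.

Lemma dvdz_sub_eq (d : int) {a b : int} : a = b -> (d %| a - b)%Z.
Proof. by move=> ->; rewrite subrr dvdz0. Qed.

Lemma dvdz_subrr (d a : int) : (d %| a - a)%Z.
Proof. exact: dvdz_sub_eq. Qed.

Lemma dvdz_mul_dvdl {d1 d2 a : int} : (d1 * d2 %| a)%Z -> (d1 %| a)%Z.
Proof. exact/dvdz_trans/dvdz_mulr/dvdzz. Qed.

Lemma dvdz_mul_dvdr {d1 d2 a : int} : (d1 * d2 %| a)%Z -> (d2 %| a)%Z.
Proof. exact/dvdz_trans/dvdz_mull/dvdzz. Qed.

Lemma divzK_eq {d x : int} : (d %| x)%Z -> x = (x %/ d)%Z * d.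
Proof. by move=> h; rewrite divzK. Qed.

(** * Congruences behind the symmetries *)

(* "Plucker relation" refers to the congruence
   [D1 C2 + B1 B2 + C1 D2 = 0 mod D1 D2] of [kl_cond]. *)
Lemma plucker_modl {d1 d2 b1 c1 b2 c2 : int} :
  (d1 * d2 %| d1 * c2 + b1 * b2 + c1 * d2)%Z -> (d1 %| b1 * b2 + c1 * d2)%Z.
Proof. by move/dvdz_mul_dvdl => h; apply: (dvdz_comb2 1 (- c2) h (dvdzz d1)); ring. Qed.

Lemma plucker_swap {d1 d2 b1 c1 b2 c2 : int} :
  (d1 * d2 %| d1 * c2 + b1 * b2 + c1 * d2)%Z ->
  (d2 * d1 %| d2 * c1 + b2 * b1 + c2 * d1)%Z.
Proof.
have -> : d2 * c1 + b2 * b1 + c2 * d1 = d1 * c2 + b1 * b2 + c1 * d2 by ring.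
by rewrite [d2 * d1]mulrC.
Qed.

(* [x1 = y1 d2 - z1 b2] is the residue mod [d1] with [x1 b1 = d2] and
   [x1 c1 = - b2]; in particular it does not depend on the Bezout pair. *)
Section SecondRow.
Context {d1 d2 b1 c1 b2 y1 z1 : int}.
Hypothesis plucker1 : (d1 %| b1 * b2 + c1 * d2)%Z.
Hypothesis bezout1 : (d1 %| y1 * b1 + z1 * c1 - 1)%Z.

Lemma secrow_mulB : (d1 %| (y1 * d2 - z1 * b2) * b1 - d2)%Z.
Proof. by apply: (dvdz_comb2 d2 (- z1) bezout1 plucker1); ring. Qed.

Lemma secrow_mulC : (d1 %| (y1 * d2 - z1 * b2) * c1 + b2)%Z.
Proof. by apply: (dvdz_comb2 y1 (- b2) plucker1 bezout1); ring. Qed.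

Lemma secrow_unique (l : int) :
  (d1 %| l * b1 - d2)%Z -> (d1 %| l * c1 + b2)%Z ->
  (d1 %| (y1 * d2 - z1 * b2) - l)%Z.
Proof. by move=> h1 h2; apply: (dvdz_comb3 l (- y1) (- z1) bezout1 h1 h2); ring. Qed.
End SecondRow.

(* The torus action of a unit [s] mod [d1 d2]: [b1], [c1] are scaled by [s]
   and [k], the carry of [s b1] mod [d1], is moved to [c2] to keep the
   Plucker relation; the second row [x1] gets scaled by [s^-1]. *)
Section Torus.
Context {d1 d2 s s' b1 c1 b2 c2 y1 z1 y2 z2 k j i b1' c1' c2' : int}.
Hypothesis unit_s : (d1 * d2 %| s * s' - 1)%Z.
Hypothesis plucker : (d1 * d2 %| d1 * c2 + b1 * b2 + c1 * d2)%Z.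
Hypothesis bezout1 : (d1 %| y1 * b1 + z1 * c1 - 1)%Z.
Hypothesis bezout2 : (d2 %| y2 * b2 + z2 * c2 - 1)%Z.
Hypothesis def_b1' : b1' = s * b1 - k * d1.
Hypothesis def_c1' : c1' = s * c1 - j * d1.
Hypothesis def_c2' : c2' = s * c2 + k * b2 - i * d2.
Let unit_s1 : (d1 %| s * s' - 1)%Z := dvdz_mul_dvdl unit_s.
Let unit_s2 : (d2 %| s * s' - 1)%Z := dvdz_mul_dvdr unit_s.
Let plucker1 := plucker_modl plucker.

Lemma torus_plucker : (d1 * d2 %| d1 * c2' + b1' * b2 + c1' * d2)%Z.
Proof.
rewrite def_b1' def_c1' def_c2'.
by apply: (dvdz_comb2 s (- (i + j)) plucker (dvdzz (d1 * d2))); ring.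
Qed.

Lemma torus_bezout1 : (d1 %| (s' * y1) * b1' + (s' * z1) * c1' - 1)%Z.
Proof.
rewrite def_b1' def_c1'.
apply: (dvdz_comb3 (y1 * b1 + z1 * c1) 1 (- (s' * (y1 * k + z1 * j)))
          unit_s1 bezout1 (dvdzz d1)); ring.
Qed.

Lemma torus_bezout2 : (d2 %| (y2 - s' * z2 * k) * b2 + (s' * z2) * c2' - 1)%Z.
Proof.
rewrite def_c2'.
by apply: (dvdz_comb3 (z2 * c2) 1 (- (s' * z2 * i)) unit_s2 bezout2 (dvdzz d2)); ring.
Qed.

Lemma torus_secrow1_mulB : (d1 %| (s' * (y1 * d2 - z1 * b2)) * b1' - d2)%Z.
Proof.
rewrite def_b1'.
apply: (dvdz_comb3 ((y1 * d2 - z1 * b2) * b1) 1 (- (s' * (y1 * d2 - z1 * b2) * k))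
          unit_s1 (secrow_mulB plucker1 bezout1) (dvdzz d1)); ring.
Qed.

Lemma torus_secrow1_mulC : (d1 %| (s' * (y1 * d2 - z1 * b2)) * c1' + b2)%Z.
Proof.
rewrite def_c1'.
apply: (dvdz_comb3 ((y1 * d2 - z1 * b2) * c1) 1 (- (s' * (y1 * d2 - z1 * b2) * j))
          unit_s1 (secrow_mulC plucker1 bezout1) (dvdzz d1)); ring.
Qed.

Lemma torus_secrow2_mulC : (d2 %| (y2 * d1 - z2 * b1) * c2' + b1')%Z.
Proof.
have plucker2 := plucker_modl (plucker_swap plucker).
rewrite def_c2' def_b1'.
apply: (dvdz_comb3 s k (- ((y2 * d1 - z2 * b1) * i)) (secrow_mulC plucker2 bezout2)
          (secrow_mulB plucker2 bezout2) (dvdzz d2)); ring.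
Qed.
End Torus.

Lemma torus_c2K {d1 d2 s s' w b1 b1' b2 c2 c2' c2'' k k' i i' : int} :
  d1 != 0 -> s * s' - 1 = w * (d1 * d2) ->
  b1' = s * b1 - k * d1 -> b1 = s' * b1' - k' * d1 ->
  c2' = s * c2 + k * b2 - i * d2 -> c2'' = s' * c2' + k' * b2 - i' * d2 ->
  (d2 %| c2'' - c2)%Z.
Proof.
move=> d1_neq0 def_w def_b1' def_b1 -> ->.
have carry : s' * k + k' = w * d2 * b1.
  have : (s' * k + k' - w * d2 * b1) * d1 = 0.
    transitivity (- s' * (s * b1 - k * d1 - b1') - (s' * b1' - k' * d1 - b1)
                  + (s * s' - 1 - w * (d1 * d2)) * b1); first by ring.
    by rewrite -def_b1' -def_b1 def_w !subrr; ring.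
  by move/eqP; rewrite mulf_eq0 (negPf d1_neq0) orbF subr_eq0 => /eqP.
apply: (dvdz_comb2 (w * (d1 * c2) + w * b2 * b1) (- (s' * i + i')) (dvdzz d2) (dvdzz d2)).
have -> : s' * (s * c2 + k * b2 - i * d2) + k' * b2 - i' * d2 - c2 =
   (s * s' - 1) * c2 + (s' * k + k') * b2 - (s' * i + i') * d2 by ring.
by rewrite def_w carry; ring.
Qed.

(* The dual tuple trades [b] for the second row [x]: [b1' = x1], [b2' = x2],
   and [c1' = z2 + l b1'], [c2' = z1 + k b2'] where [k], [l] are the carries
   of [x1] mod [d1] and of [x2] mod [d2]. *)
Section Dual.
Context {d1 d2 b1 c1 b2 c2 y1 z1 y2 z2 k l i j b1' b2' c1' c2' : int}.
Hypothesis plucker : (d1 * d2 %| d1 * c2 + b1 * b2 + c1 * d2)%Z.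
Hypothesis bezout1 : (d1 %| y1 * b1 + z1 * c1 - 1)%Z.
Hypothesis bezout2 : (d2 %| y2 * b2 + z2 * c2 - 1)%Z.
Let x1 := y1 * d2 - z1 * b2.
Let x2 := y2 * d1 - z2 * b1.
Hypothesis def_b1' : b1' = x1 - k * d1.
Hypothesis def_b2' : b2' = x2 - l * d2.
Hypothesis def_c1' : c1' = z2 + l * b1' - j * d1.
Hypothesis def_c2' : c2' = z1 + k * b2' - i * d2.
Let plucker1 := plucker_modl plucker.

Lemma dual_plucker : (d1 * d2 %| d1 * c2' + b1' * b2' + c1' * d2)%Z.
Proof.
rewrite def_c1' def_c2' def_b1' def_b2' /x1 /x2.
apply: (dvdz_comb4 (y1 * y2 - k * l - i - j) (z1 * z2) (- z1) (- z2)
  (dvdzz (d1 * d2)) plucker (dvdz_mul (dvdzz d1) bezout2) (dvdz_mul bezout1 (dvdzz d2))).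
ring.
Qed.

Lemma dual_bezout1 :
  (d1 %| (- ((y2 * b2 + z2 * c2 - 1) %/ d2)%Z * b1 - y2 * c1 - l * c2) * b1'
         + c2 * c1' - 1)%Z.
Proof.
set p2 := ((y2 * b2 + z2 * c2 - 1) %/ d2)%Z.
have def_p2 : y2 * b2 + z2 * c2 - 1 = p2 * d2 by rewrite divzK.
rewrite def_c1' def_b1'.
apply: (dvdz_comb4 (- p2) (- y2) (k * (p2 * b1 + y2 * c1) - c2 * j) 1
  (secrow_mulB plucker1 bezout1) (secrow_mulC plucker1 bezout1) (dvdzz d1)
  (dvdz_sub_eq d1 def_p2)).
by rewrite /x1; ring.
Qed.

Lemma dual_secrow1_mulB : (d1 %| b1 * b1' - d2)%Z.
Proof.
rewrite def_b1'.
apply: (dvdz_comb2 1 (- (k * b1)) (secrow_mulB plucker1 bezout1) (dvdzz d1)).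
by rewrite /x1; ring.
Qed.

Lemma dual_secrow1_mulC : (d1 %| b1 * c1' + b2')%Z.
Proof.
rewrite def_c1' def_b1' def_b2'.
apply: (dvdz_comb2 l (y2 - j * b1 - l * k * b1) (secrow_mulB plucker1 bezout1) (dvdzz d1)).
by rewrite /x1 /x2; ring.
Qed.
End Dual.

Section DualInvolutive.
Context {d1 d2 b1 c1 b2 c2 y1 z1 y2 z2 k l i b1' b2' c2' y2' z2' l' q p1 p2' : int}.
Hypothesis plucker : d1 * c2 + b1 * b2 + c1 * d2 = q * (d1 * d2).
Hypothesis bezout1 : y1 * b1 + z1 * c1 - 1 = p1 * d1.
Hypothesis bezout2' : y2' * b2' + z2' * c2' - 1 = p2' * d2.
Hypothesis secrow2_mulC : (d2 %| (y2 * d1 - z2 * b1) * c2 + b1)%Z.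
Hypothesis def_b1' : b1' = (y1 * d2 - z1 * b2) - k * d1.
Hypothesis def_b2' : b2' = (y2 * d1 - z2 * b1) - l * d2.
Hypothesis def_c2' : c2' = z1 + k * b2' - i * d2.
Hypothesis def_b2 : b2 = (y2' * d1 - z2' * b1') - l' * d2.

Lemma dual_c1K : d2 != 0 -> (d1 %| z2' + l' * b1 - c1)%Z.
Proof.
move=> d2_neq0; rewrite -(dvdz_mul2r (p := d2)) //.
set W := b1 * (y2' + z2' * k) + c2 * (1 - z2' * z1).
have dvd_W : (d2 %| W)%Z.
  apply: (dvdz_comb5 (y2' + z2' * k) (c2 * (- p2' - z2' * i - l * (y2' + z2' * k)))
     (- c2) (c2 * z2') (c2 * (y2' + z2' * k)) secrow2_mulC (dvdzz d2)
     (dvdz_sub_eq d2 bezout2') (dvdz_sub_eq d2 def_c2') (dvdz_sub_eq d2 def_b2')).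
  by rewrite /W; ring.
apply: (dvdz_comb6 1 (- q - z2' * p1 + z2' * z1 * q) b1 (- (z2' * b1)) (- (z2' * d2))
   (z2' * z1 - 1) (dvdz_mul (dvdzz d1) dvd_W) (dvdzz (d1 * d2))
   (dvdz_sub_eq (d1 * d2) def_b2) (dvdz_sub_eq (d1 * d2) def_b1')
   (dvdz_sub_eq (d1 * d2) bezout1) (dvdz_sub_eq (d1 * d2) plucker)).
by rewrite /W; ring.
Qed.
End DualInvolutive.

(** * The summation set of the Kloosterman sum *)

Lemma dvdn_dvdz (d m : nat) : (d %| m)%N = (d%:Z %| m%:Z)%Z.
Proof. by rewrite dvdzE !absz_nat. Qed.

Lemma eqn_mod_dvdz (a b d : nat) : (a == b %[mod d])%N = (d%:Z %| a%:Z - b%:Z)%Z.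
Proof. by rewrite -eqz_mod_dvd -eqz_nat -!modz_nat. Qed.

Lemma bezout_primitive {D B C : nat} {y z : int} :
  (D%:Z %| y * B%:Z + z * C%:Z - 1)%Z -> gcdn (gcdn B C) D == 1%N.
Proof.
move=> bezout; set g := gcdn (gcdn B C) D.
have g_dvdB : (g%:Z %| B%:Z)%Z by rewrite -dvdn_dvdz (dvdn_trans (dvdn_gcdl _ _)) ?dvdn_gcdl.
have g_dvdC : (g%:Z %| C%:Z)%Z by rewrite -dvdn_dvdz (dvdn_trans (dvdn_gcdl _ _)) ?dvdn_gcdr.
have g_dvdD : (g%:Z %| D%:Z)%Z by rewrite -dvdn_dvdz dvdn_gcdr.
have : (g%:Z %| 1)%Z.
  by apply: (dvdz_comb3 y z (-1) g_dvdB g_dvdC (dvdz_trans g_dvdD bezout)); ring.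
by rewrite dvdz1 absz_nat.
Qed.

Lemma primitive_bezout {D B C : nat} :
  gcdn (gcdn B C) D == 1%N -> exists y z : int, (D%:Z %| y * B%:Z + z * C%:Z - 1)%Z.
Proof.
move=> /eqP prim.
have [u1 [v1 def_gBC]] := Bezoutz B%:Z C%:Z.
have [u2 [v2 def_g]] := Bezoutz (gcdz B%:Z C%:Z) D%:Z.
have g_eq1 : gcdz (gcdz B%:Z C%:Z) D%:Z = 1 by rewrite /gcdz !absz_nat prim.
exists (u2 * u1), (u2 * v1); apply: (dvdz_comb1 (- v2) (dvdzz D%:Z)).
by rewrite -[1 in LHS]g_eq1 -def_g -def_gBC; ring.
Qed.

Definition ord_modz (n : nat) (x : int) : 'I_n.+1 := inord `|(x %% n.+1)%Z|%N.

Lemma ord_modz_mod (n : nat) (x : int) : (ord_modz n x : int) = (x %% n.+1)%Z.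
Proof.
rewrite /ord_modz inordK ?gez0_abs ?modz_ge0 //.
by rewrite -ltz_nat gez0_abs ?modz_ge0 ?ltz_mod.
Qed.

Lemma ord_modzE (n : nat) (x : int) : (ord_modz n x : int) = x - (x %/ n.+1)%Z * n.+1.
Proof. by rewrite ord_modz_mod {2}(divz_eq x n.+1) addrC addKr. Qed.

Lemma ord_modz_dvd (n : nat) (x : int) : (n.+1%:Z %| x - (ord_modz n x : int))%Z.
Proof. by rewrite ord_modzE; apply: (dvdz_comb1 (x %/ n.+1)%Z (dvdzz _)); ring. Qed.

Lemma ord_modz_eq (n : nat) (x : int) (o : 'I_n.+1) :
  (n.+1%:Z %| x - (o : int))%Z -> ord_modz n x = o.
Proof.
move=> dvd_xo; apply: val_inj; apply/eqP; rewrite /= -eqz_nat ord_modz_mod.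
rewrite -(subrK (o : int) x) -(divzK dvd_xo) modzMDl modz_small //.
by rewrite ltz_nat ltn_ord.
Qed.

Definition ord_scale (n : nat) (s : int) (x : 'I_n.+1) : 'I_n.+1 := ord_modz n (s * x).

Lemma ord_scaleK {n : nat} {s s' : int} :
  (n.+1%:Z %| s * s' - 1)%Z -> cancel (ord_scale n s) (ord_scale n s').
Proof.
move=> unit_s x; apply: ord_modz_eq.
by apply: (dvdz_comb2 (- s') (x : int) (ord_modz_dvd n (s * x)) unit_s); ring.
Qed.

Lemma YZ_bezout (n : nat) (B C : 'I_n.+1) : gcdn (gcdn B C) n.+1 == 1%N ->
  (n.+1%:Z %| ((YZ B C).1 : int) * (B : int) + ((YZ B C).2 : int) * (C : int) - 1)%Z.
Proof.
rewrite /YZ; case: pickP => [p /= | no_pair prim].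
  by rewrite eqn_mod_dvdz PoszD !PoszM.
have [y [z bezout]] := primitive_bezout prim; exfalso.
have := no_pair (ord_modz n y, ord_modz n z); rewrite /= eqn_mod_dvdz PoszD !PoszM.
move/negbT/negP; apply.
apply: (dvdz_comb3 1 (- (B : int)) (- (C : int)) bezout (ord_modz_dvd n y)
          (ord_modz_dvd n z)); ring.
Qed.

Section KlTuple.
Local Set Implicit Arguments.
Local Unset Strict Implicit.
Variables n1 n2 : nat.
Local Notation D1 := n1.+1.
Local Notation D2 := n2.+1.

Definition kl_tuple := (('I_D1 * 'I_D1) * ('I_D2 * 'I_D2))%type.

Implicit Type p : kl_tuple.

Definition kB1 p : int := p.1.1.
Definition kC1 p : int := p.1.2.
Definition kB2 p : int := p.2.1.
Definition kC2 p : int := p.2.2.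
Definition kY1 p : int := (YZ p.1.1 p.1.2).1.
Definition kZ1 p : int := (YZ p.1.1 p.1.2).2.
Definition kY2 p : int := (YZ p.2.1 p.2.2).1.
Definition kZ2 p : int := (YZ p.2.1 p.2.2).2.
(* [kX1], [kX2] are the coefficients of [n1], [n2] in the phases of [KlS]. *)
Definition kX1 p : int := kY1 p * D2%:Z - kZ1 p * kB2 p.
Definition kX2 p : int := kY2 p * D1%:Z - kZ2 p * kB1 p.
Definition kl_valid p : bool := kl_cond p.1.1 p.1.2 p.2.1 p.2.2.

Lemma kl_validP p : kl_valid p ->
  [/\ (D1%:Z %| kY1 p * kB1 p + kZ1 p * kC1 p - 1)%Z,
      (D2%:Z %| kY2 p * kB2 p + kZ2 p * kC2 p - 1)%Z &
      (D1%:Z * D2%:Z %| D1%:Z * kC2 p + kB1 p * kB2 p + kC1 p * D2%:Z)%Z].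
Proof.
case/and3P => prim1 prim2 plucker.
split; [exact: YZ_bezout prim1 | exact: YZ_bezout prim2 |].
by move: plucker; rewrite -/(dvdn _ _) dvdn_dvdz !PoszD !PoszM.
Qed.

Lemma kl_validI p (y1 z1 y2 z2 : int) :
  (D1%:Z %| y1 * kB1 p + z1 * kC1 p - 1)%Z ->
  (D2%:Z %| y2 * kB2 p + z2 * kC2 p - 1)%Z ->
  (D1%:Z * D2%:Z %| D1%:Z * kC2 p + kB1 p * kB2 p + kC1 p * D2%:Z)%Z -> kl_valid p.
Proof.
move=> bezout1 bezout2 plucker; apply/and3P.
split; [exact: bezout_primitive bezout1 | exact: bezout_primitive bezout2 |].
by rewrite -/(dvdn _ _) dvdn_dvdz !PoszD !PoszM.
Qed.

Lemma kX1_mulC p : kl_valid p -> (D1%:Z %| kX1 p * kC1 p + kB2 p)%Z.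
Proof.
by case/kl_validP => bezout1 _ /plucker_modl plucker1; exact: secrow_mulC plucker1 bezout1.
Qed.

Lemma kX2_mulC p : kl_valid p -> (D2%:Z %| kX2 p * kC2 p + kB1 p)%Z.
Proof.
case/kl_validP => _ bezout2 /plucker_swap/plucker_modl plucker2.
exact: secrow_mulC plucker2 bezout2.
Qed.

Lemma kX1_unique p (l : int) : kl_valid p ->
  (D1%:Z %| l * kB1 p - D2%:Z)%Z -> (D1%:Z %| l * kC1 p + kB2 p)%Z ->
  (D1%:Z %| kX1 p - l)%Z.
Proof. by case/kl_validP => bezout1 _ _; exact: secrow_unique bezout1 l. Qed.

Lemma kX2_unique p (l : int) : kl_valid p ->
  (D2%:Z %| l * kB2 p - D1%:Z)%Z -> (D2%:Z %| l * kC2 p + kB1 p)%Z ->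
  (D2%:Z %| kX2 p - l)%Z.
Proof. by case/kl_validP => _ bezout2 _; exact: secrow_unique bezout2 l. Qed.
End KlTuple.

Section KlTorus.
Local Set Implicit Arguments.
Local Unset Strict Implicit.
Variables n1 n2 : nat.
Local Notation D1 := n1.+1.
Local Notation D2 := n2.+1.
Implicit Type p : kl_tuple n1 n2.

Definition kl_torus (s : int) p : kl_tuple n1 n2 :=
  ((ord_modz n1 (s * kB1 p), ord_modz n1 (s * kC1 p)),
   (p.2.1, ord_modz n2 (s * kC2 p + (s * kB1 p %/ D1)%Z * kB2 p))).

Variables s s' : int.
Hypothesis unit_s : (D1%:Z * D2%:Z %| s * s' - 1)%Z.

Lemma kl_torusB1 p : kB1 (kl_torus s p) = s * kB1 p - (s * kB1 p %/ D1)%Z * D1.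
Proof. exact: ord_modzE. Qed.

Lemma kl_torusC1 p : kC1 (kl_torus s p) = s * kC1 p - (s * kC1 p %/ D1)%Z * D1.
Proof. exact: ord_modzE. Qed.

Lemma kl_torusC2 p : kC2 (kl_torus s p) = s * kC2 p + (s * kB1 p %/ D1)%Z * kB2 p -
   ((s * kC2 p + (s * kB1 p %/ D1)%Z * kB2 p) %/ D2)%Z * D2.
Proof. exact: ord_modzE. Qed.

Lemma kl_torus_valid p : kl_valid p -> kl_valid (kl_torus s p).
Proof.
case/kl_validP => bezout1 bezout2 plucker.
apply: (kl_validI (torus_bezout1 unit_s bezout1 (kl_torusB1 p) (kl_torusC1 p))
                  (torus_bezout2 unit_s bezout2 (kl_torusC2 p))).
exact: (torus_plucker plucker (kl_torusB1 p) (kl_torusC1 p) (kl_torusC2 p)).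
Qed.

Lemma kl_torusB1_mod p : (D1%:Z %| kB1 (kl_torus s p) - s * kB1 p)%Z.
Proof. by rewrite kl_torusB1; apply: (dvdz_comb1 (- (s * kB1 p %/ D1)%Z) (dvdzz _)); ring. Qed.

Lemma kl_torusX1 p : kl_valid p -> (D1%:Z %| kX1 (kl_torus s p) - s' * kX1 p)%Z.
Proof.
move=> valid_p; have [bezout1 _ plucker] := kl_validP valid_p.
apply: (kX1_unique (kl_torus_valid valid_p)).
  exact: (torus_secrow1_mulB unit_s plucker bezout1 (kl_torusB1 p)).
exact: (torus_secrow1_mulC unit_s plucker bezout1 (kl_torusC1 p)).
Qed.

Lemma kl_torusX2 p : kl_valid p -> (D2%:Z %| kX2 (kl_torus s p) - kX2 p)%Z.
Proof.
move=> valid_p; have [_ bezout2 plucker] := kl_validP valid_p.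
apply: (kX2_unique (kl_torus_valid valid_p)).
  exact: (secrow_mulB (plucker_modl (plucker_swap plucker)) bezout2).
exact: (torus_secrow2_mulC plucker bezout2 (kl_torusB1 p) (kl_torusC2 p)).
Qed.

Lemma kl_torusK p : kl_valid p -> kl_torus s' (kl_torus s p) = p.
Proof.
move=> valid_p; set q := kl_torus s p.
have unit_s1 : (D1%:Z %| s * s' - 1)%Z := dvdz_mul_dvdl unit_s.
have B1K : ord_modz n1 (s' * kB1 q) = p.1.1.
  apply: ord_modz_eq; rewrite kl_torusB1.
  by apply: (dvdz_comb2 (kB1 p) (- (s' * (s * kB1 p %/ D1)%Z)) unit_s1 (dvdzz _)); ring.
have C1K : ord_modz n1 (s' * kC1 q) = p.1.2.
  apply: ord_modz_eq; rewrite kl_torusC1.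
  by apply: (dvdz_comb2 (kC1 p) (- (s' * (s * kC1 p %/ D1)%Z)) unit_s1 (dvdzz _)); ring.
have C2K : ord_modz n2 (s' * kC2 q + (s' * kB1 q %/ D1)%Z * kB2 q) = p.2.2.
  apply: ord_modz_eq.
  have B1q : kB1 p = s' * kB1 q - (s' * kB1 q %/ D1)%Z * D1 by rewrite -ord_modzE B1K.
  apply: (torus_c2K (c2'' := s' * kC2 q + (s' * kB1 q %/ D1)%Z * kB2 q) (i' := 0) _
           (divzK_eq unit_s) (kl_torusB1 p) B1q (kl_torusC2 p)) => //.
  by rewrite mul0r subr0.
case: p valid_p @q B1K C1K C2K => [[B1 C1] [B2 C2]] _ q B1K C1K C2K.
by rewrite /kl_torus B1K C1K C2K.
Qed.
End KlTorus.

Section KlDual.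
Local Set Implicit Arguments.
Local Unset Strict Implicit.
Variables n1 n2 : nat.
Local Notation D1 := n1.+1.
Local Notation D2 := n2.+1.
Implicit Type p : kl_tuple n1 n2.

Definition kl_dual p : kl_tuple n1 n2 :=
  ((ord_modz n1 (kX1 p), ord_modz n1 (kZ2 p + (kX2 p %/ D2)%Z * ord_modz n1 (kX1 p))),
   (ord_modz n2 (kX2 p), ord_modz n2 (kZ1 p + (kX1 p %/ D1)%Z * ord_modz n2 (kX2 p)))).

Lemma kl_dualB1 p : kB1 (kl_dual p) = kX1 p - (kX1 p %/ D1)%Z * D1.
Proof. exact: ord_modzE. Qed.

Lemma kl_dualB2 p : kB2 (kl_dual p) = kX2 p - (kX2 p %/ D2)%Z * D2.
Proof. exact: ord_modzE. Qed.

Lemma kl_dualC1 p : kC1 (kl_dual p) = kZ2 p + (kX2 p %/ D2)%Z * kB1 (kl_dual p) -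
   ((kZ2 p + (kX2 p %/ D2)%Z * kB1 (kl_dual p)) %/ D1)%Z * D1.
Proof. exact: ord_modzE. Qed.

Lemma kl_dualC2 p : kC2 (kl_dual p) = kZ1 p + (kX1 p %/ D1)%Z * kB2 (kl_dual p) -
   ((kZ1 p + (kX1 p %/ D1)%Z * kB2 (kl_dual p)) %/ D2)%Z * D2.
Proof. exact: ord_modzE. Qed.

Lemma kl_dual_valid p : kl_valid p -> kl_valid (kl_dual p).
Proof.
case/kl_validP => bezout1 bezout2 plucker.
apply: (kl_validI (dual_bezout1 plucker bezout1 bezout2 (kl_dualB1 p) (kl_dualC1 p))
          (dual_bezout1 (plucker_swap plucker) bezout2 bezout1 (kl_dualB2 p) (kl_dualC2 p))).
exact: (dual_plucker plucker bezout1 bezout2 (kl_dualB1 p) (kl_dualB2 p)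
          (kl_dualC1 p) (kl_dualC2 p)).
Qed.

Lemma kl_dualB1_mod p : (D1%:Z %| kB1 (kl_dual p) - kX1 p)%Z.
Proof. by rewrite kl_dualB1; apply: (dvdz_comb1 (- (kX1 p %/ D1)%Z) (dvdzz _)); ring. Qed.

Lemma kl_dualB2_mod p : (D2%:Z %| kB2 (kl_dual p) - kX2 p)%Z.
Proof. by rewrite kl_dualB2; apply: (dvdz_comb1 (- (kX2 p %/ D2)%Z) (dvdzz _)); ring. Qed.

Lemma kl_dualX1 p : kl_valid p -> (D1%:Z %| kX1 (kl_dual p) - kB1 p)%Z.
Proof.
move=> valid_p; have [bezout1 _ plucker] := kl_validP valid_p.
apply: (kX1_unique (kl_dual_valid valid_p)).
  exact: (dual_secrow1_mulB plucker bezout1 (kl_dualB1 p)).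
exact: (dual_secrow1_mulC plucker bezout1 (kl_dualB1 p) (kl_dualB2 p) (kl_dualC1 p)).
Qed.

Lemma kl_dualX2 p : kl_valid p -> (D2%:Z %| kX2 (kl_dual p) - kB2 p)%Z.
Proof.
move=> valid_p; have [_ bezout2 plucker] := kl_validP valid_p.
apply: (kX2_unique (kl_dual_valid valid_p)).
  exact: (dual_secrow1_mulB (plucker_swap plucker) bezout2 (kl_dualB2 p)).
exact: (dual_secrow1_mulC (plucker_swap plucker) bezout2 (kl_dualB2 p) (kl_dualB1 p)
          (kl_dualC2 p)).
Qed.

Lemma kl_dualK p : kl_valid p -> kl_dual (kl_dual p) = p.
Proof.
move=> valid_p; have [bezout1 bezout2 plucker] := kl_validP valid_p.
have valid_q := kl_dual_valid valid_p; have [bezout1' bezout2' _] := kl_validP valid_q.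
set q := kl_dual p in valid_q bezout1' bezout2' *.
have B1K : ord_modz n1 (kX1 q) = p.1.1 by apply: ord_modz_eq; exact: kl_dualX1.
have B2K : ord_modz n2 (kX2 q) = p.2.1 by apply: ord_modz_eq; exact: kl_dualX2.
have C1K : ord_modz n1 (kZ2 q + (kX2 q %/ D2)%Z * ord_modz n1 (kX1 q)) = p.1.2.
  apply: ord_modz_eq; rewrite B1K.
  apply: (dual_c1K (divzK_eq plucker) (divzK_eq bezout1) (divzK_eq bezout2')
            (kX2_mulC valid_p) (kl_dualB1 p) (kl_dualB2 p) (kl_dualC2 p) _ isT).
  by rewrite -[kB2 p]/(p.2.1 : int) -B2K ord_modzE.
have C2K : ord_modz n2 (kZ1 q + (kX1 q %/ D1)%Z * ord_modz n2 (kX2 q)) = p.2.2.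
  apply: ord_modz_eq; rewrite B2K.
  apply: (dual_c1K (divzK_eq (plucker_swap plucker)) (divzK_eq bezout2) (divzK_eq bezout1')
            (kX1_mulC valid_p) (kl_dualB2 p) (kl_dualB1 p) (kl_dualC1 p) _ isT).
  by rewrite -[kB1 p]/(p.1.1 : int) -B1K ord_modzE.
rewrite [kl_dual q]/kl_dual C1K C2K B1K B2K.
by case: (p) => [[B1 C1] [B2 C2]].
Qed.
End KlDual.

(** * Symmetries of the Kloosterman sum *)

Lemma periodicz {R : numDomainType} {U : zmodType} {f : R -> U} {T : R} :
  periodic f T -> forall (q : int) a, f (a + q%:~R * T) = f a.
Proof.
move=> f_per [] n a; first by rewrite mulr_natl periodicn.
rewrite NegzE intrN mulNr mulr_natl -[a in RHS](subrK (T *+ n.+1)).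
by rewrite periodicn.
Qed.

Lemma sum_valid_reindex {V : nmodType} {I : finType} {P : pred I} {h h' : I -> I}
    {G : I -> V} :
  (forall p, P p -> P (h p)) -> (forall p, P p -> h' (h p) = p) ->
  \sum_p (if P p then G p else 0) = \sum_p (if P p then G (h p) else 0).
Proof.
move=> hP hK; pose H p := if P p then h p else p; pose H' p := if P p then h' p else p.
have HK : cancel H H'.
  by move=> p; rewrite /H /H'; case Pp: (P p); rewrite ?hP ?hK ?Pp.
rewrite (reindex_inj (can_inj HK)); apply: eq_bigr => p _.
by rewrite /H; case Pp: (P p); rewrite ?hP ?Pp.
Qed.

Lemma sum_ord_scale {V : nmodType} {n : nat} {s s' : int} {F : int -> V} :
  (n.+1%:Z %| s * s' - 1)%Z -> (forall a b, (n.+1%:Z %| a - b)%Z -> F a = F b) ->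
  \sum_(x : 'I_n.+1) F (s * x) = \sum_(x : 'I_n.+1) F x.
Proof.
move=> unit_s F_per; rewrite [RHS](reindex_inj (can_inj (ord_scaleK unit_s))).
by apply: eq_bigr => x _; apply: F_per; exact: ord_modz_dvd.
Qed.

Section KloostermanSum.
Local Set Implicit Arguments.
Local Unset Strict Implicit.
Context {R : realType}.

Lemma ee_mod (n : nat) (k k' : int) :
  (n.+1%:Z %| k - k')%Z -> ee R k n.+1 = ee R k' n.+1.
Proof.
move=> /dvdzP [q def_q]; have -> : k = k' + q * n.+1 by rewrite -def_q addrC subrK.
rewrite /ee; have -> : 2 * pi * (k' + q * n.+1)%:~R / n.+1%:R =
          2 * pi * k'%:~R / n.+1%:R + q%:~R * (pi *+ 2) :> R.
  rewrite intrD intrM -[(n.+1%:Z)%:~R]/(n.+1%:R) mulr2n.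
  by field; rewrite addrC natr1 pnatr_eq0.
by rewrite (periodicz (@cosD2pi R)) (periodicz (@sinD2pi R)).
Qed.

Lemma KlS_tupleE (n1 n2 : nat) (m1 m2 k1 k2 : int) :
  KlS R m1 m2 k1 k2 n1.+1 n2.+1 =
  \sum_(p : kl_tuple n1 n2) (if kl_valid p then
     ee R (m1 * kB1 p + k1 * kX1 p) n1.+1 * ee R (m2 * kB2 p + k2 * kX2 p) n2.+1 else 0).
Proof.
rewrite /KlS; under eq_bigr do under eq_bigr do rewrite pair_bigA.
by rewrite pair_bigA pair_bigA.
Qed.

Lemma KlS_mod (n1 n2 : nat) (m1 m2 k1 k2 m1' m2' k1' k2' : int) :
  (n1.+1%:Z %| m1 - m1')%Z -> (n2.+1%:Z %| m2 - m2')%Z ->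
  (n1.+1%:Z %| k1 - k1')%Z -> (n2.+1%:Z %| k2 - k2')%Z ->
  KlS R m1 m2 k1 k2 n1.+1 n2.+1 = KlS R m1' m2' k1' k2' n1.+1 n2.+1.
Proof.
move=> h1 h2 h3 h4; rewrite !KlS_tupleE; apply: eq_bigr => p _.
case: ifP => // _; congr (_ * _); apply: ee_mod.
  by apply: (dvdz_comb2 (kB1 p) (kX1 p) h1 h3); ring.
by apply: (dvdz_comb2 (kB2 p) (kX2 p) h2 h4); ring.
Qed.

Lemma KlS_dual (n1 n2 : nat) (m1 m2 k1 k2 : int) :
  KlS R m1 m2 k1 k2 n1.+1 n2.+1 = KlS R k1 k2 m1 m2 n1.+1 n2.+1.
Proof.
rewrite !KlS_tupleE (sum_valid_reindex (@kl_dual_valid n1 n2) (@kl_dualK n1 n2)).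
apply: eq_bigr => p _; case: ifP => // valid_p; congr (_ * _); apply: ee_mod.
  by apply: (dvdz_comb2 m1 k1 (kl_dualB1_mod p) (kl_dualX1 valid_p)); ring.
by apply: (dvdz_comb2 m2 k2 (kl_dualB2_mod p) (kl_dualX2 valid_p)); ring.
Qed.

Lemma KlS_torus (n1 n2 : nat) (s s' m1 m2 k1 k2 : int) :
  (n1.+1%:Z * n2.+1%:Z %| s * s' - 1)%Z ->
  KlS R m1 m2 k1 k2 n1.+1 n2.+1 = KlS R (s * m1) m2 (s' * k1) k2 n1.+1 n2.+1.
Proof.
move=> unit_s.
rewrite !KlS_tupleE (sum_valid_reindex (h' := kl_torus s') (kl_torus_valid unit_s)
                       (kl_torusK unit_s)).
apply: eq_bigr => p _; case: ifP => // valid_p; congr (_ * _); apply: ee_mod.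
  by apply: (dvdz_comb2 m1 k1 (kl_torusB1_mod s p) (kl_torusX1 unit_s valid_p)); ring.
by apply: (dvdz_comb1 k2 (kl_torusX2 unit_s valid_p)); rewrite /kB2 /=; ring.
Qed.

Lemma KlS_swap (n1 n2 : nat) (m1 m2 k1 k2 : int) :
  KlS R m1 m2 k1 k2 n1.+1 n2.+1 = KlS R m2 m1 k2 k1 n2.+1 n1.+1.
Proof.
rewrite !KlS_tupleE; pose h (q : kl_tuple n2 n1) : kl_tuple n1 n2 := (q.2, q.1).
rewrite (reindex h); last by exists (fun p : kl_tuple n1 n2 => (p.2, p.1)) => [[]|[]].
apply: eq_bigr => q _.
have -> : kl_valid (h q) = kl_valid q.
  rewrite /kl_valid /h /= /kl_cond andbCA; congr (_ && (_ && _)).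
  by congr (_ %% _ == 0)%N; ring.
by case: ifP => // _; rewrite mulrC.
Qed.

Lemma KlS_torus2 (n1 n2 : nat) (s s' m1 m2 k1 k2 : int) :
  (n2.+1%:Z * n1.+1%:Z %| s * s' - 1)%Z ->
  KlS R m1 m2 k1 k2 n1.+1 n2.+1 = KlS R m1 (s * m2) k1 (s' * k2) n1.+1 n2.+1.
Proof. by move=> unit_s; rewrite KlS_swap (KlS_torus _ _ _ _ unit_s) -KlS_swap. Qed.

Lemma KlShat_mod (n1 n2 : nat) (a a' u u' t t' b : int) :
  (n1.+1%:Z %| a - a')%Z -> (n2.+1%:Z %| u - u')%Z -> (n1.+1%:Z %| t - t')%Z ->
  KlShat R a u t b n1.+1 n2.+1 = KlShat R a' u' t' b n1.+1 n2.+1.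
Proof.
move=> ha hu ht; rewrite /KlShat; congr (_ * _).
apply: eq_bigr => x _; apply: eq_bigr => y _.
rewrite (KlS_mod (m1' := a') (m2' := y) (k1' := x) (k2' := b) ha) ?dvdz_subrr //.
congr (_ * _ * _); apply: ee_mod.
  by apply: (dvdz_comb1 (- (x : int)) ht); ring.
by apply: (dvdz_comb1 (- (y : int)) hu); ring.
Qed.

Lemma KlShat_unit_left (n1 n2 : nat) (a v t s s' : int) :
  (n1.+1%:Z %| s - a)%Z -> (n1.+1%:Z * n2.+1%:Z %| s * s' - 1)%Z ->
  KlShat R a v t 1 n1.+1 n2.+1 = KlShat R 1 v (s' * t) 1 n1.+1 n2.+1.
Proof.
move=> s_a unit_s; have unit_s1 := dvdz_mul_dvdl unit_s.
rewrite /KlShat; congr (_ * _).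
pose F (z : int) := \sum_(y : 'I_n2.+1) KlS R 1 y z 1 n1.+1 n2.+1 *
   ee R (- ((s' * z) * t)) n1.+1 * ee R (- (y%:Z * v)) n2.+1.
have F_per a0 b0 : (n1.+1%:Z %| a0 - b0)%Z -> F a0 = F b0.
  move=> h; apply: eq_bigr => y _.
  rewrite (KlS_mod (m1' := 1) (m2' := y) (k1' := b0) (k2' := 1)) ?dvdz_subrr //.
  congr (_ * _ * _); apply: ee_mod.
  by apply: (dvdz_comb1 (- (s' * t)) h); ring.
transitivity (\sum_(x : 'I_n1.+1) F (s * x)).
  apply: eq_bigr => x _; apply: eq_bigr => y _.
  have -> : KlS R 1 y (s * x) 1 n1.+1 n2.+1 = KlS R a y x 1 n1.+1 n2.+1.
    rewrite (KlS_torus _ _ _ _ unit_s); apply: KlS_mod; rewrite ?mulr1 ?dvdz_subrr //.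
    by apply: (dvdz_comb1 (x : int) unit_s1); ring.
  congr (_ * _ * _); apply: ee_mod.
  by apply: (dvdz_comb1 ((x : int) * t) unit_s1); ring.
rewrite (sum_ord_scale unit_s1 F_per); apply: eq_bigr => x _; apply: eq_bigr => y _.
by have -> : s' * (x : int) * t = (x : int) * (s' * t) by ring.
Qed.

Lemma sum_cabs_KlShat_scale (n1 n2 : nat) (v s s' : int) :
  (n1.+1%:Z %| s * s' - 1)%Z ->
  \sum_(t : 'I_n1.+1) cabs (KlShat R 1 v (s' * t) 1 n1.+1 n2.+1) =
  \sum_(t : 'I_n1.+1) cabs (KlShat R 1 v t 1 n1.+1 n2.+1).
Proof.
rewrite mulrC => unit_s'.
apply: (sum_ord_scale (F := fun z => cabs (KlShat R 1 v z 1 n1.+1 n2.+1)) unit_s') => t t' t_t'.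
by rewrite (KlShat_mod (a' := 1) (u' := v) (t' := t')) ?dvdz_subrr.
Qed.

Lemma KlShat_swap_unit (n1 n2 : nat) (a w u s s' : int) :
  (n2.+1%:Z %| s - a)%Z -> (n2.+1%:Z * n1.+1%:Z %| s * s' - 1)%Z ->
  KlShat R a u w 1 n2.+1 n1.+1 = KlShat R 1 (s' * w) u 1 n1.+1 n2.+1.
Proof.
move=> s_a unit_s; have unit_s2 := dvdz_mul_dvdl unit_s.
rewrite /KlShat [(n2.+1%:R * _)]mulrC; congr (_ * _).
rewrite exchange_big /=; apply: eq_bigr => y _.
pose F (z : int) := KlS R 1 z y 1 n1.+1 n2.+1 * ee R (- (y%:Z * u)) n1.+1 *
   ee R (- ((s' * z) * w)) n2.+1.
have F_per a0 b0 : (n2.+1%:Z %| a0 - b0)%Z -> F a0 = F b0.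
  move=> h; rewrite /F (KlS_mod (m1' := 1) (m2' := b0) (k1' := y) (k2' := 1)) ?dvdz_subrr //.
  congr (_ * _); apply: ee_mod.
  by apply: (dvdz_comb1 (- (s' * w)) h); ring.
transitivity (\sum_(x : 'I_n2.+1) F (s * x)).
  apply: eq_bigr => x _; rewrite /F.
  have -> : KlS R a y x 1 n2.+1 n1.+1 = KlS R 1 (s * x) y 1 n1.+1 n2.+1.
    rewrite KlS_swap KlS_dual (KlS_torus2 _ _ _ _ unit_s).
    apply: KlS_mod; rewrite ?dvdz_subrr //.
    by apply: (dvdz_comb2 (- s') 1 s_a unit_s2); ring.
  rewrite mulrAC; congr (_ * _); apply: ee_mod.
  by apply: (dvdz_comb1 ((x : int) * w) unit_s2); ring.
rewrite (sum_ord_scale unit_s2 F_per); apply: eq_bigr => x _.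
by rewrite /F; have -> : s' * (x : int) * w = (x : int) * (s' * w) by ring.
Qed.
End KloostermanSum.

(** * Maximising over units *)

Lemma coprime_bezoutz {x D : nat} : coprime x D -> exists y : int, (D%:Z %| y * x%:Z - 1)%Z.
Proof.
move=> coprime_x; have /primitive_bezout [y [z bezout]] : gcdn (gcdn x 0) D == 1%N.
  by rewrite gcdn0.
by exists y; move: bezout; rewrite mulr0 addr0.
Qed.

Lemma bezoutz_coprime {x D : nat} {y : int} : (D%:Z %| y * x%:Z - 1)%Z -> coprime x D.
Proof.
move=> bezout; rewrite /coprime -(gcdn0 x).
by apply: (bezout_primitive (y := y) (z := 0)); rewrite mul0r addr0.
Qed.

Lemma coprime_ord_modz1 (n : nat) : coprime (ord_modz n 1) n.+1.
Proof.
by apply: (bezoutz_coprime (y := 1)); apply: (dvdz_comb1 (-1) (ord_modz_dvd n 1)); ring.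
Qed.

Lemma coprime_ord_scale {n : nat} {s s' : int} (b : 'I_n.+1) :
  (n.+1%:Z %| s * s' - 1)%Z -> coprime (ord_scale n s b) n.+1 = coprime b n.+1.
Proof.
move=> unit_s; apply/idP/idP => /coprime_bezoutz [y bezout].
  apply: (bezoutz_coprime (y := y * s)).
  by apply: (dvdz_comb2 y 1 (ord_modz_dvd n (s * b)) bezout); ring.
apply: (bezoutz_coprime (y := y * s')).
apply: (dvdz_comb3 (- (y * s')) (y * (b : int)) 1 (ord_modz_dvd n (s * b)) unit_s bezout).
ring.
Qed.

(* [s = a + D1 m], with [m] the product of the primes of [D2] not dividing
   [a], is prime to every prime of [D2]: those dividing [a] divide neither
   [D1] nor [m], the others divide [m] but not [a]. *)
Lemma coprime_lift_unit (D1 D2 : nat) {a : nat} : (0 < D1)%N -> (0 < D2)%N -> coprime a D1 ->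
  exists s s' : int, (D1%:Z %| s - a%:Z)%Z /\ (D1%:Z * D2%:Z %| s * s' - 1)%Z.
Proof.
move=> D1_gt0 D2_gt0 coprime_a.
pose m := (\prod_(p <- primes D2 | ~~ (p %| a)) p)%N.
have m_gt0 : (0 < m)%N.
  rewrite /m big_seq_cond prodn_cond_gt0 // => p /andP [+ _].
  by rewrite mem_primes => /and3P [/prime_gt0].
have dvd_m p : p \in primes D2 -> (p %| m)%N = ~~ (p %| a)%N.
  move=> p_D2; have p_pr : prime p by move: p_D2; rewrite mem_primes => /and3P [].
  rewrite /m Euclid_dvd_prod // big_has_cond; apply/hasP/idP => [[q q_D2 /=]|p_a].
    have q_pr : prime q by move: q_D2; rewrite mem_primes => /and3P [].
    by case/andP => q_a; rewrite dvdn_prime2 // => /eqP ->.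
  by exists p => //=; rewrite p_a dvdnn.
pose s := (a + D1 * m)%N.
have coprime_s2 : coprime s D2.
  have s_gt0 : (0 < s)%N by rewrite addn_gt0 muln_gt0 D1_gt0 m_gt0 orbT.
  rewrite coprime_has_primes //; apply/hasPn => p p_D2.
  have p_pr : prime p by move: p_D2; rewrite mem_primes => /and3P [].
  rewrite mem_primes s_gt0 p_pr /= /s.
  case p_a : (p %| a)%N; last by rewrite dvdn_addl ?dvdn_mull ?dvd_m ?p_a.
  have p_D1 : ~~ (p %| D1)%N by rewrite -prime_coprime // (coprime_dvdl p_a coprime_a).
  by rewrite dvdn_addr // Euclid_dvdM // negb_or p_D1 dvd_m // p_a.
have coprime_s1 : coprime s D1 by rewrite -coprime_modl /s addnC mulnC modnMDl coprime_modl.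
have [y bezout] : exists y : int, (D1%:Z * D2%:Z %| y * s%:Z - 1)%Z.
  by rewrite -PoszM; apply: coprime_bezoutz; rewrite coprimeMr coprime_s1.
exists s%:Z, y; split; last by rewrite mulrC.
by rewrite /s PoszD PoszM; apply: (dvdz_comb1 m%:Z (dvdzz _)); ring.
Qed.

Lemma cabs_ge0 (R : realType) (z : R[i]) : 0 <= cabs z.
Proof. by case: z => a b; exact: sqrtr_ge0. Qed.

Lemma bigmax_const (R : realDomainType) (I : finType) (P : pred I) (c : R) :
  (exists i, P i) -> 0 <= c -> \big[Num.max/0]_(i | P i) c = c.
Proof.
move=> [i Pi] c_ge0; rewrite big_const.
have : (0 < #|P|)%N by apply/card_gt0P; exists i.
elim: #|P| => // [[_ _|n IHn _]]; first by rewrite /= max_l.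
by rewrite iterS IHn // maxxx.
Qed.

Definition kl_mass (R : realType) (n1 n2 : nat) (v : int) : R :=
  \sum_(t : 'I_n1.+1) cabs (KlShat R 1 v t 1 n1.+1 n2.+1).

Lemma kl_mass_mod (R : realType) (n1 n2 : nat) (v v' : int) :
  (n2.+1%:Z %| v - v')%Z -> kl_mass R n1 n2 v = kl_mass R n1 n2 v'.
Proof.
move=> v_v'; apply: eq_bigr => t _.
by rewrite (KlShat_mod (a' := 1) (u' := v') (t' := t)) ?dvdz_subrr.
Qed.

Lemma kl_mass_ge0 (R : realType) (n1 n2 : nat) (v : int) : 0 <= kl_mass R n1 n2 v.
Proof. by apply: sumr_ge0 => t _; exact: cabs_ge0. Qed.

Lemma max_kl_mass_ge0 (R : realType) (n1 n2 : nat) (u : int) :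
  0 <= \big[Num.max/0]_(b : 'I_n2.+1 | coprime b n2.+1) kl_mass R n1 n2 (b%:Z * u).
Proof.
apply: (big_ind (fun x : R => 0 <= x)) => // [x y x_ge0 _|b _]; last exact: kl_mass_ge0.
by rewrite le_max x_ge0.
Qed.

Lemma RR'_kl_mass (R : realType) (n1 n2 : nat) (u : int) :
  RR' R u n1.+1 n2.+1 =
  \big[Num.max/0]_(b : 'I_n2.+1 | coprime b n2.+1) kl_mass R n1 n2 (b%:Z * u).
Proof.
rewrite -[RHS](@bigmax_const _ _ (fun a : 'I_n1.+1 => coprime a n1.+1));
  last exact: max_kl_mass_ge0; last by exists (ord_modz n1 1); exact: coprime_ord_modz1.
apply: eq_bigr => a coprime_a; apply: eq_bigr => b _.
have [s [s' [s_a unit_s]]] := coprime_lift_unit n1.+1 n2.+1 isT isT coprime_a.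
under eq_bigr do rewrite (KlShat_unit_left _ _ s_a unit_s).
exact: sum_cabs_KlShat_scale _ _ (dvdz_mul_dvdl unit_s).
Qed.

Lemma RR_kl_mass (R : realType) (n1 n2 : nat) (u : int) :
  RR R u n2.+1 n1.+1 =
  \big[Num.max/0]_(b : 'I_n2.+1 | coprime b n2.+1) kl_mass R n1 n2 (b%:Z * u).
Proof.
rewrite -[RHS](@bigmax_const _ _ (fun a : 'I_n2.+1 => coprime a n2.+1));
  last exact: max_kl_mass_ge0; last by exists (ord_modz n2 1); exact: coprime_ord_modz1.
apply: eq_bigr => a coprime_a.
have [s [s' [s_a unit_s]]] := coprime_lift_unit n2.+1 n1.+1 isT isT coprime_a.
have unit_s2 := dvdz_mul_dvdl unit_s.
rewrite (reindex_inj (can_inj (ord_scaleK unit_s2))) /=; symmetry.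
apply: eq_big => [b|b _]; first by rewrite (coprime_ord_scale _ unit_s2).
rewrite /kl_mass; under eq_bigr do rewrite (KlShat_swap_unit _ _ s_a unit_s).
apply: kl_mass_mod.
apply: (dvdz_comb2 (s' * u) (- ((b : int) * u)) (ord_modz_dvd n2 (s * b)) unit_s2).
by rewrite /ord_scale; ring.
Qed.

Theorem lemma5 (R : realType) (D1 D2 : nat) (u : int) :
  (0 < D1)%N -> (0 < D2)%N ->
  RR' R u D1 D2 = RR R u D2 D1.
Proof.
case: D1 D2 => [|n1] [|n2] // _ _.
by rewrite RR'_kl_mass RR_kl_mass.
Qed.
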